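(* For every subset $A \subseteq \overline{\mathbb{Q}}$ there is a transcendental entire function $f$ such that $S_{f^{(s)}} = A$ for every integer $s \geq 0$.
   Context: $\overline{\mathbb{Q}}$ denotes the set of algebraic numbers in $\mathbb{C}$. For an entire function $g$, its exceptional set is $S_g = \{\alpha \in \overline{\mathbb{Q}} : g(\alpha) \in \overline{\mathbb{Q}}\}$. A transcendental entire function is an entire function $\mathbb{C}\to\mathbb{C}$ that is not a polynomial. $f^{(s)}$ denotes the $s$-th derivative of $f$, with $f^{(0)}=f$. *)

From Stdlib Require Import Reals Lra ZArith List.
Open Scope R_scope.

Definition CC : Type := (R * R)%type.
Definition Cre (z : CC) : R := fst z.
Definition Cim (z : CC) : R := snd z.
Definition RtoC (x : R) : CC := (x, 0).
Definition C0 : CC := (0, 0).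
Definition Cadd (z w : CC) : CC := (fst z + fst w, snd z + snd w).
Definition Copp (z : CC) : CC := (- fst z, - snd z).
Definition Csub (z w : CC) : CC := Cadd z (Copp w).
Definition Cmul (z w : CC) : CC :=
  (fst z * fst w - snd z * snd w, fst z * snd w + snd z * fst w).
Definition Cmod (z : CC) : R := sqrt (fst z * fst z + snd z * snd z).

Definition has_cderiv (f : CC -> CC) (z l : CC) : Prop :=
  forall eps : R, 0 < eps -> exists delta : R, 0 < delta /\
    forall h : CC, Cmod h < delta ->
      Cmod (Csub (Csub (f (Cadd z h)) (f z)) (Cmul l h)) <= eps * Cmod h.

Definition cdifferentiable (f : CC -> CC) (z : CC) : Prop :=
  exists l, has_cderiv f z l.

Definition entire (f : CC -> CC) : Prop := forall z, cdifferentiable f z.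

Fixpoint Cpoly_eval (l : list CC) (z : CC) : CC :=
  match l with
  | nil => C0
  | a :: l' => Cadd a (Cmul z (Cpoly_eval l' z))
  end.

Definition is_polynomial_fun (f : CC -> CC) : Prop :=
  exists l : list CC, forall z, f z = Cpoly_eval l z.

Definition transcendental_entire (f : CC -> CC) : Prop :=
  entire f /\ ~ is_polynomial_fun f.

Definition algebraic (z : CC) : Prop :=
  exists l : list Z, Exists (fun k => k <> 0%Z) l /\
    Cpoly_eval (map (fun k => RtoC (IZR k)) l) z = C0.

Definition exceptional_set (g : CC -> CC) (alpha : CC) : Prop :=
  algebraic alpha /\ algebraic (g alpha).

Definition derivative_sequence (f : CC -> CC) (D : nat -> CC -> CC) : Prop :=
  D 0%nat = f /\ forall (s : nat) (z : CC), has_cderiv (D s) z (D (S s) z).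

From Stdlib Require Import Reals ZArith List.
From Stdlib Require Import Lra Lia Psatz Classical ClassicalEpsilon FunctionalExtensionality Cantor.
Open Scope R_scope.

(* For every set A of algebraic numbers we build an entire function
     F(z) = sum_k c_k (z - p_0)(z - p_1) ... (z - p_(k-1)),
   where the node sequence p visits every algebraic number infinitely often.
   If the node a = p_k occurred s times among p_0, ..., p_(k-1), then
   F^(s)(a) only involves c_0, ..., c_k, and depends on c_k affinely with a
   nonzero slope.  Since the algebraic numbers are countable while every
   segment is not, and since nonzero Gaussian rationals are dense, c_k can be
   chosen (arbitrarily small) so that F^(s)(a) is algebraic and nonzero if
   a is in A and transcendental otherwise.  As each pair (a, s) is reached at
   some stage, S_{F^(s)} = A for all s; F is not a polynomial because all its
   derivatives are nonzero at the algebraic point 0. *)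


Ltac cring := repeat match goal with z : CC |- _ => destruct z end;
  unfold Csub, Cadd, Copp, Cmul, C0, RtoC in *; simpl in *; f_equal; ring.

Notation ev := Cpoly_eval.

Lemma Cmul_0_r x : Cmul x C0 = C0. Proof. cring. Qed.
Lemma Cmul_0_l x : Cmul C0 x = C0. Proof. cring. Qed.
Lemma Cadd_0_l x : Cadd C0 x = x. Proof. cring. Qed.
Lemma Cadd_0_r x : Cadd x C0 = x. Proof. cring. Qed.
Lemma Csub_diag a : Csub a a = C0. Proof. cring. Qed.

Lemma Cmul_eq0 x y : Cmul x y = C0 -> x = C0 \/ y = C0.
Proof.
  destruct x as [a b], y as [c d]. unfold Cmul, C0; simpl. intros H. injection H as H1 H2.
  assert (E : (a*a+b*b)*(c*c+d*d) = 0).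
  { replace ((a*a+b*b)*(c*c+d*d)) with ((a*c-b*d)*(a*c-b*d) + (a*d+b*c)*(a*d+b*c)) by ring.
    rewrite H1, H2. ring. }
  apply Rmult_integral in E. destruct E as [E|E]; [left|right]; f_equal; nra.
Qed.

Lemma Cmul_neq0 x y : x <> C0 -> y <> C0 -> Cmul x y <> C0.
Proof. intros Hx Hy H. destruct (Cmul_eq0 _ _ H); auto. Qed.

Lemma Csub_eq0 a b : Csub a b = C0 -> a = b.
Proof. destruct a, b. unfold Csub, Cadd, Copp, C0; simpl. intros E. injection E as E1 E2. f_equal; lra. Qed.

Lemma Csub_neq0 a b : a <> b -> Csub a b <> C0.
Proof. intros H E. apply H, Csub_eq0, E. Qed.

Lemma RtoC_INR_S_neq0 n : RtoC (INR (S n)) <> C0.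
Proof.
  intros E. apply (f_equal fst) in E. unfold RtoC, C0 in E. cbn [fst] in E.
  pose proof (lt_0_INR (S n) ltac:(lia)). lra.
Qed.

Definition Ceq_dec (x y : CC) : {x = y} + {x <> y}.
Proof.
  destruct x as [a b], y as [c d].
  destruct (Req_EM_T a c) as [->|H]; [|right; intro E; injection E; auto].
  destruct (Req_EM_T b d) as [->|H]; [left; reflexivity|right; intro E; injection E; auto].
Defined.

(* The l^1 norm |Re z| + |Im z|: submultiplicative and equivalent to [Cmod],
   but free of square roots, hence convenient for all estimates below. *)
Definition norm1 (z : CC) : R := Rabs (fst z) + Rabs (snd z).

Lemma norm1_nonneg z : 0 <= norm1 z.
Proof. unfold norm1. pose proof (Rabs_pos (fst z)); pose proof (Rabs_pos (snd z)). lra. Qed.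

Lemma norm1_C0 : norm1 C0 = 0.
Proof. unfold norm1, C0; simpl. rewrite Rabs_R0. ring. Qed.

Lemma norm1_eq0 x : norm1 x = 0 -> x = C0.
Proof.
  destruct x as [a b]. unfold norm1, C0; simpl. intros H.
  pose proof (Rabs_pos a); pose proof (Rabs_pos b).
  pose proof (Rle_abs a); pose proof (Rle_abs (-a)); pose proof (Rle_abs b); pose proof (Rle_abs (-b)).
  rewrite !Rabs_Ropp in *. f_equal; lra.
Qed.

Lemma norm1_add x y : norm1 (Cadd x y) <= norm1 x + norm1 y.
Proof.
  destruct x as [a b], y as [c d]; unfold norm1, Cadd; simpl.
  pose proof (Rabs_triang a c); pose proof (Rabs_triang b d). lra.
Qed.

Lemma norm1_sub x y : norm1 (Csub x y) <= norm1 x + norm1 y.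
Proof.
  destruct x as [a b], y as [c d]; unfold norm1, Csub, Cadd, Copp; simpl.
  pose proof (Rabs_triang a (-c)); pose proof (Rabs_triang b (-d)). rewrite !Rabs_Ropp in *. lra.
Qed.

Lemma norm1_mul x y : norm1 (Cmul x y) <= norm1 x * norm1 y.
Proof.
  destruct x as [a b], y as [c d]; unfold norm1, Cmul; simpl. unfold Rminus.
  pose proof (Rabs_triang (a*c) (-(b*d))); pose proof (Rabs_triang (a*d) (b*c)).
  rewrite Rabs_Ropp in H. rewrite !Rabs_mult in *.
  pose proof (Rabs_pos a); pose proof (Rabs_pos b); pose proof (Rabs_pos c); pose proof (Rabs_pos d).
  nra.
Qed.

Lemma Rabs_fst_le_norm1 z : Rabs (fst z) <= norm1 z.
Proof. unfold norm1. pose proof (Rabs_pos (snd z)). lra. Qed.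

Lemma Rabs_snd_le_norm1 z : Rabs (snd z) <= norm1 z.
Proof. unfold norm1. pose proof (Rabs_pos (fst z)). lra. Qed.

Lemma Cmod_le_norm1 z : Cmod z <= norm1 z.
Proof.
  destruct z as [a b]; unfold Cmod, norm1; simpl.
  pose proof (Rabs_pos a); pose proof (Rabs_pos b).
  rewrite <- (sqrt_Rsqr (Rabs a + Rabs b)) by lra.
  apply sqrt_le_1_alt. unfold Rsqr.
  assert (Rabs a * Rabs a = a * a) by (rewrite <- Rabs_mult; apply Rabs_right; nra).
  assert (Rabs b * Rabs b = b * b) by (rewrite <- Rabs_mult; apply Rabs_right; nra).
  nra.
Qed.

Lemma norm1_le_Cmod z : norm1 z <= 2 * Cmod z.
Proof.
  destruct z as [a b]; unfold Cmod, norm1; simpl.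
  assert (Rabs a <= sqrt (a * a + b * b) /\ Rabs b <= sqrt (a * a + b * b)) as [Ha Hb].
  { split; rewrite <- sqrt_Rsqr_abs; apply sqrt_le_1_alt; unfold Rsqr; nra. }
  lra.
Qed.

Lemma Cmod_nonneg z : 0 <= Cmod z.
Proof. apply sqrt_pos. Qed.

(* Multiplication by z keeps the empty
   list empty, so that differentiation strictly shortens nonempty lists. *)
Fixpoint ladd (x y : list CC) : list CC :=
  match x, y with
  | nil, _ => y
  | _, nil => x
  | a :: x', b :: y' => Cadd a b :: ladd x' y'
  end.

Definition lscale (c : CC) (l : list CC) : list CC := map (Cmul c) l.

Definition xmul (l : list CC) : list CC := match l with nil => nil | _ => C0 :: l end.

Definition lin_mul (a : CC) (l : list CC) : list CC := ladd (xmul l) (lscale (Copp a) l).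

(* Formal derivative, from (a + z l(z))' = l(z) + z l'(z). *)
Fixpoint deriv (l : list CC) : list CC :=
  match l with
  | nil => nil
  | a :: l' => ladd l' (xmul (deriv l'))
  end.

Definition derivn (n : nat) (l : list CC) : list CC := Nat.iter n deriv l.

Lemma ladd_nil_r x : ladd x nil = x.
Proof. destruct x; reflexivity. Qed.

Lemma ladd_assoc x y w : ladd x (ladd y w) = ladd (ladd x y) w.
Proof.
  revert y w; induction x as [|a x IH]; intros [|b y] [|c w]; simpl; try reflexivity.
  rewrite IH. f_equal. cring.
Qed.

Lemma ladd_comm x y : ladd x y = ladd y x.
Proof.
  revert y; induction x as [|a x IH]; intros [|b y]; simpl; try reflexivity.
  rewrite IH. f_equal. cring.
Qed.

Lemma xmul_ladd x y : xmul (ladd x y) = ladd (xmul x) (xmul y).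
Proof. destruct x, y; simpl; try reflexivity. f_equal. cring. Qed.

Lemma lscale_ladd c x y : lscale c (ladd x y) = ladd (lscale c x) (lscale c y).
Proof.
  revert y; induction x as [|a x IH]; intros [|b y]; simpl; try reflexivity.
  unfold lscale in *; simpl. rewrite IH. f_equal. cring.
Qed.

Lemma lscale_xmul c l : lscale c (xmul l) = xmul (lscale c l).
Proof. destruct l; [reflexivity|]. unfold lscale; simpl. f_equal. cring. Qed.

Lemma eval_ladd x y z : ev (ladd x y) z = Cadd (ev x z) (ev y z).
Proof.
  revert y; induction x as [|a x IH]; intros [|b y]; simpl; try cring.
  rewrite IH. cring.
Qed.

Lemma eval_lscale c l z : ev (lscale c l) z = Cmul c (ev l z).
Proof.
  induction l as [|a l IH]; simpl; [cring|].
  unfold lscale in *. simpl. rewrite IH. cring.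
Qed.

Lemma eval_xmul l z : ev (xmul l) z = Cmul z (ev l z).
Proof. destruct l; simpl; cring. Qed.

Lemma eval_lin_mul a l z : ev (lin_mul a l) z = Cmul (Csub z a) (ev l z).
Proof. unfold lin_mul. rewrite eval_ladd, eval_lscale, eval_xmul. cring. Qed.

Lemma deriv_ladd x y : deriv (ladd x y) = ladd (deriv x) (deriv y).
Proof.
  revert y; induction x as [|a x IH]; intros [|b y]; simpl; try reflexivity.
  - rewrite ladd_nil_r. reflexivity.
  - rewrite IH, xmul_ladd, !ladd_assoc. f_equal.
    rewrite <- !ladd_assoc. f_equal. apply ladd_comm.
Qed.

Lemma deriv_lscale c l : deriv (lscale c l) = lscale c (deriv l).
Proof.
  induction l as [|a l IH]; [reflexivity|].
  change (deriv (lscale c (a :: l))) with (ladd (lscale c l) (xmul (deriv (lscale c l)))).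
  simpl. rewrite IH, lscale_ladd, lscale_xmul. reflexivity.
Qed.

Lemma deriv_xmul l : deriv (xmul l) = ladd l (xmul (deriv l)).
Proof. destruct l; reflexivity. Qed.

Lemma deriv_lin_mul a l : deriv (lin_mul a l) = ladd l (lin_mul a (deriv l)).
Proof.
  unfold lin_mul. rewrite deriv_ladd, deriv_lscale, deriv_xmul.
  rewrite <- ladd_assoc; reflexivity.
Qed.

Lemma derivn_S s l : derivn (S s) l = derivn s (deriv l).
Proof. unfold derivn. simpl. rewrite Nat.iter_swap. reflexivity. Qed.

Lemma eval_derivn_ladd s x y z :
  ev (derivn s (ladd x y)) z = Cadd (ev (derivn s x) z) (ev (derivn s y) z).
Proof.
  revert x y; induction s as [|s IH]; intros x y; [apply eval_ladd|].
  rewrite !derivn_S, deriv_ladd. apply IH.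
Qed.

Lemma eval_derivn_lin_mul s a l z :
  ev (derivn (S s) (lin_mul a l)) z =
  Cadd (Cmul (RtoC (INR (S s))) (ev (derivn s l) z)) (Cmul (Csub z a) (ev (derivn (S s) l) z)).
Proof.
  revert l; induction s as [|s IH]; intros l.
  - rewrite derivn_S. simpl. rewrite deriv_lin_mul, eval_ladd, eval_lin_mul. cring.
  - rewrite derivn_S, deriv_lin_mul, eval_derivn_ladd, IH, <- !derivn_S, (S_INR (S s)). cring.
Qed.

Lemma length_ladd x y : length (ladd x y) = Nat.max (length x) (length y).
Proof.
  revert y; induction x as [|a x IH]; intros [|b y]; simpl; try reflexivity.
  rewrite IH. reflexivity.
Qed.

Lemma length_deriv l : (length (deriv l) <= pred (length l))%nat.
Proof.
  induction l as [|a l IH]; simpl; [lia|].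
  rewrite length_ladd. destruct l as [|b l]; [reflexivity|].
  destruct (deriv (b :: l)); simpl in *; lia.
Qed.

Lemma length_derivn n l : (length (derivn n l) <= length l - n)%nat.
Proof.
  revert l; induction n as [|n IH]; intros l; [simpl; lia|].
  rewrite derivn_S. pose proof (IH (deriv l)). pose proof (length_deriv l). lia.
Qed.

Lemma eval_derivn_high l n z : (length l <= n)%nat -> ev (derivn n l) z = C0.
Proof.
  intros Hn. pose proof (length_derivn n l) as H.
  destruct (derivn n l); [reflexivity|simpl in H; lia].
Qed.

Definition vanishing_order (l : list CC) (a : CC) (m : nat) : Prop :=
  (forall s, (s < m)%nat -> ev (derivn s l) a = C0) /\ ev (derivn m l) a <> C0.

Lemma vanishing_order_lin_mul_same l a m :
  vanishing_order l a m -> vanishing_order (lin_mul a l) a (S m).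
Proof.
  intros [H1 H2]. split.
  - intros [|s] Hs.
    + simpl. rewrite eval_lin_mul, Csub_diag. apply Cmul_0_l.
    + rewrite eval_derivn_lin_mul, Csub_diag, Cmul_0_l, Cadd_0_r, H1 by lia. apply Cmul_0_r.
  - rewrite eval_derivn_lin_mul, Csub_diag, Cmul_0_l, Cadd_0_r.
    apply Cmul_neq0; auto. apply RtoC_INR_S_neq0.
Qed.

Lemma vanishing_order_lin_mul_other l a b m :
  b <> a -> vanishing_order l a m -> vanishing_order (lin_mul b l) a m.
Proof.
  intros Hab [H1 H2]. split.
  - intros [|s] Hs.
    + simpl. rewrite eval_lin_mul. change (ev l a) with (ev (derivn 0 l) a).
      rewrite H1 by lia. apply Cmul_0_r.
    + rewrite eval_derivn_lin_mul, !H1 by lia. rewrite !Cmul_0_r. apply Cadd_0_l.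
  - destruct m as [|m].
    + simpl. rewrite eval_lin_mul. apply Cmul_neq0; auto. apply Csub_neq0; auto.
    + rewrite eval_derivn_lin_mul, H1, Cmul_0_r, Cadd_0_l by lia.
      apply Cmul_neq0; auto. apply Csub_neq0; auto.
Qed.

Fixpoint node_poly (p : nat -> CC) (k : nat) : list CC :=
  match k with
  | O => RtoC 1 :: nil
  | S k => lin_mul (p k) (node_poly p k)
  end.

Fixpoint multiplicity (p : nat -> CC) (a : CC) (k : nat) : nat :=
  match k with
  | O => O
  | S k => (multiplicity p a k + if Ceq_dec (p k) a then 1 else 0)%nat
  end.

Lemma multiplicity_mono p a k l : (k <= l)%nat -> (multiplicity p a k <= multiplicity p a l)%nat.
Proof. induction 1; simpl; lia. Qed.

Lemma node_poly_order p k a : vanishing_order (node_poly p k) a (multiplicity p a k).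
Proof.
  induction k as [|k IH]; simpl.
  - split; [intros s Hs; lia|]. unfold RtoC, C0; simpl. intro E; injection E; lra.
  - destruct (Ceq_dec (p k) a) as [<-|E].
    + rewrite Nat.add_1_r. apply vanishing_order_lin_mul_same; auto.
    + rewrite Nat.add_0_r. apply vanishing_order_lin_mul_other; auto.
Qed.

Definition order (p : nat -> CC) (k : nat) : nat := multiplicity p (p k) k.

Lemma node_poly_vanish p k l :
  (k < l)%nat -> ev (derivn (order p k) (node_poly p l)) (p k) = C0.
Proof.
  intros H. apply (node_poly_order p l (p k)).
  pose proof (multiplicity_mono p (p k) (S k) l H). simpl in H0.
  destruct (Ceq_dec (p k) (p k)); [unfold order; lia|congruence].
Qed.

Lemma node_poly_pivot p k : ev (derivn (order p k) (node_poly p k)) (p k) <> C0.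
Proof. apply (node_poly_order p k (p k)). Qed.

(* Majorants on the disc norm1 z <= r: [maj0 r l] bounds |l(z)|, [maj1 r l]
   bounds the difference quotient of l, and [maj2 r l] bounds the
   second-order Taylor remainder of l divided by |h|^2 (Lemma [taylor2_bound]). *)
Fixpoint maj0 (r : R) (l : list CC) : R :=
  match l with nil => 0 | a :: l' => norm1 a + r * maj0 r l' end.
Fixpoint maj1 (r : R) (l : list CC) : R :=
  match l with nil => 0 | _ :: l' => maj0 r l' + r * maj1 r l' end.
Fixpoint maj2 (r : R) (l : list CC) : R :=
  match l with nil => 0 | _ :: l' => maj1 r l' + r * maj2 r l' end.

Lemma maj_nonneg r l : 0 <= r -> 0 <= maj0 r l /\ 0 <= maj1 r l /\ 0 <= maj2 r l.
Proof.
  intros Hr. induction l as [|a l IH]; simpl; [lra|].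
  pose proof (norm1_nonneg a). repeat split; nra.
Qed.

Lemma maj_mono r r' l : 0 <= r -> r <= r' ->
  maj0 r l <= maj0 r' l /\ maj1 r l <= maj1 r' l /\ maj2 r l <= maj2 r' l.
Proof.
  intros Hr Hrr. induction l as [|a l IH]; simpl; [lra|].
  destruct (maj_nonneg r l Hr) as [A0 [A1 A2]]. repeat split; nra.
Qed.

Lemma value_bound r l z : norm1 z <= r -> norm1 (ev l z) <= maj0 r l.
Proof.
  intros Hz. induction l as [|a l IH]; simpl.
  - rewrite norm1_C0; lra.
  - pose proof (norm1_add a (Cmul z (ev l z))). pose proof (norm1_mul z (ev l z)).
    pose proof (norm1_nonneg z). pose proof (norm1_nonneg (ev l z)). nra.
Qed.

Lemma difference_bound r l z h : norm1 z + norm1 h <= r ->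
  norm1 (Csub (ev l (Cadd z h)) (ev l z)) <= norm1 h * maj1 r l.
Proof.
  intros Hr. induction l as [|a l IH]; simpl.
  - replace (Csub C0 C0) with C0 by cring. rewrite norm1_C0; lra.
  - replace (Csub (Cadd a (Cmul (Cadd z h) (ev l (Cadd z h)))) (Cadd a (Cmul z (ev l z))))
      with (Cadd (Cmul z (Csub (ev l (Cadd z h)) (ev l z))) (Cmul h (ev l (Cadd z h)))) by cring.
    pose proof (norm1_add (Cmul z (Csub (ev l (Cadd z h)) (ev l z))) (Cmul h (ev l (Cadd z h)))).
    pose proof (norm1_mul z (Csub (ev l (Cadd z h)) (ev l z))).
    pose proof (norm1_mul h (ev l (Cadd z h))).
    pose proof (value_bound r l (Cadd z h) ltac:(pose proof (norm1_add z h); lra)).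
    pose proof (norm1_nonneg z); pose proof (norm1_nonneg h).
    pose proof (norm1_nonneg (Csub (ev l (Cadd z h)) (ev l z))).
    assert (norm1 z <= r) by lra.
    nra.
Qed.

Lemma eval_deriv_cons a l z : ev (deriv (a :: l)) z = Cadd (ev l z) (Cmul z (ev (deriv l) z)).
Proof. simpl. rewrite eval_ladd, eval_xmul. reflexivity. Qed.

Lemma taylor2_bound r l z h : norm1 z + norm1 h <= r ->
  norm1 (Csub (Csub (ev l (Cadd z h)) (ev l z)) (Cmul (ev (deriv l) z) h))
    <= norm1 h * norm1 h * maj2 r l.
Proof.
  intros Hr. induction l as [|a l IH].
  - simpl. replace (Csub (Csub C0 C0) (Cmul C0 h)) with C0 by cring. rewrite norm1_C0; lra.
  - rewrite eval_deriv_cons. simpl ev.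
    set (R2 := Csub (Csub (ev l (Cadd z h)) (ev l z)) (Cmul (ev (deriv l) z) h)) in *.
    set (R1 := Csub (ev l (Cadd z h)) (ev l z)).
    replace (Csub (Csub (Cadd a (Cmul (Cadd z h) (ev l (Cadd z h)))) (Cadd a (Cmul z (ev l z))))
               (Cmul (Cadd (ev l z) (Cmul z (ev (deriv l) z))) h))
      with (Cadd (Cmul z R2) (Cmul h R1)) by (unfold R1, R2; cring).
    pose proof (norm1_add (Cmul z R2) (Cmul h R1)).
    pose proof (norm1_mul z R2). pose proof (norm1_mul h R1).
    pose proof (difference_bound r l z h Hr) as HR1. fold R1 in HR1.
    pose proof (norm1_nonneg z); pose proof (norm1_nonneg h).
    destruct (maj_nonneg r l ltac:(lra)) as [_ [_ M2]].
    assert (norm1 z * norm1 R2 <= r * (norm1 h * norm1 h * maj2 r l)).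
    { apply Rmult_le_compat; auto using norm1_nonneg; lra. }
    assert (norm1 h * norm1 R1 <= norm1 h * (norm1 h * maj1 r l))
      by (apply Rmult_le_compat_l; auto).
    simpl maj2. nra.
Qed.

Lemma has_cderiv_of_quadratic_bound (g : CC -> CC) (z l : CC) (C : R) : 0 <= C ->
  (forall h, Cmod h < 1/2 ->
     norm1 (Csub (Csub (g (Cadd z h)) (g z)) (Cmul l h)) <= norm1 h * norm1 h * C) ->
  has_cderiv g z l.
Proof.
  intros HC HE eps Heps. exists (Rmin (1/2) (eps / (4 * C + 1))). split.
  { apply Rmin_pos; [lra|]. apply Rdiv_lt_0_compat; lra. }
  intros h Hh.
  assert (Hh1 : Cmod h < 1/2) by (pose proof (Rmin_l (1/2) (eps / (4 * C + 1))); lra).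
  assert (Hh2 : Cmod h <= eps / (4 * C + 1)) by (pose proof (Rmin_r (1/2) (eps / (4 * C + 1))); lra).
  set (e := Csub (Csub (g (Cadd z h)) (g z)) (Cmul l h)).
  pose proof (HE h Hh1) as He. fold e in He. pose proof (Cmod_le_norm1 e).
  pose proof (norm1_le_Cmod h). pose proof (norm1_nonneg h). pose proof (Cmod_nonneg h).
  assert (H4 : 4 * C * Cmod h <= eps).
  { apply (Rmult_le_compat_l (4 * C + 1)) in Hh2; [|lra].
    replace ((4 * C + 1) * (eps / (4 * C + 1))) with eps in Hh2 by (field; lra). nra. }
  assert (norm1 h * norm1 h * C <= 4 * C * Cmod h * Cmod h).
  { assert (norm1 h * norm1 h <= 4 * (Cmod h * Cmod h)) by nra. nra. }
  assert (4 * C * Cmod h * Cmod h <= eps * Cmod h) by (apply Rmult_le_compat_r; auto).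
  lra.
Qed.

Lemma poly_has_cderiv l z : has_cderiv (ev l) z (ev (deriv l) z).
Proof.
  set (r := norm1 z + 1). pose proof (norm1_nonneg z).
  apply (has_cderiv_of_quadratic_bound _ _ _ (maj2 r l)).
  - apply maj_nonneg. unfold r; lra.
  - intros h Hh. apply taylor2_bound.
    pose proof (norm1_le_Cmod h). unfold r; lra.
Qed.

(* Complex derivatives are unique (test with a small real increment). *)
Lemma cderiv_unique g z l1 l2 : has_cderiv g z l1 -> has_cderiv g z l2 -> l1 = l2.
Proof.
  intros H1 H2. apply NNPP. intro Hne.
  set (d := norm1 (Csub l1 l2)).
  assert (Hd : 0 < d).
  { pose proof (norm1_nonneg (Csub l1 l2)). destruct (Req_dec d 0) as [E|E]; [|unfold d in *; lra].
    exfalso. apply Hne, Csub_eq0, norm1_eq0, E. }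
  destruct (H1 (d/8) ltac:(lra)) as [d1 [Hd1 K1]].
  destruct (H2 (d/8) ltac:(lra)) as [d2 [Hd2 K2]].
  set (t := Rmin d1 d2 / 2).
  pose proof (Rmin_l d1 d2); pose proof (Rmin_r d1 d2); pose proof (Rmin_pos _ _ Hd1 Hd2).
  set (h := RtoC t).
  assert (Hch : Cmod h = t).
  { unfold Cmod, h, RtoC; simpl. replace (t * t + 0 * 0) with (t * t) by ring.
    apply sqrt_square. unfold t; lra. }
  specialize (K1 h ltac:(unfold t in *; lra)). specialize (K2 h ltac:(unfold t in *; lra)).
  set (E1 := Csub (Csub (g (Cadd z h)) (g z)) (Cmul l1 h)) in *.
  set (E2 := Csub (Csub (g (Cadd z h)) (g z)) (Cmul l2 h)) in *.
  assert (E : Cmul (Csub l1 l2) h = Csub E2 E1) by (unfold E1, E2; cring).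
  assert (HN : norm1 (Cmul (Csub l1 l2) h) = d * t).
  { unfold h, d, norm1, RtoC, Cmul; simpl. rewrite !Rmult_0_r, Rminus_0_r, Rplus_0_l.
    rewrite !Rabs_mult, (Rabs_right t) by (unfold t; lra). ring. }
  rewrite E in HN. pose proof (norm1_sub E2 E1). pose proof (norm1_le_Cmod E1).
  pose proof (norm1_le_Cmod E2). rewrite Hch in K1, K2. unfold t in *. nra.
Qed.

(* Real series: [summable u] says the partial sums converge, and [series_sum u]
   is their limit (chosen classically; 0 for divergent series). *)
Definition summable (u : nat -> R) : Prop := exists l, Un_cv (fun N => sum_f_R0 u N) l.

Definition series_sum (u : nat -> R) : R :=
  match excluded_middle_informative (summable u) with
  | left H => proj1_sig (constructive_indefinite_description _ H)
  | right _ => 0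
  end.

Lemma series_sum_spec u : summable u -> Un_cv (fun N => sum_f_R0 u N) (series_sum u).
Proof.
  intros H. unfold series_sum. destruct (excluded_middle_informative (summable u)); [|contradiction].
  apply (proj2_sig (constructive_indefinite_description _ s)).
Qed.

Lemma series_sum_unique u l : Un_cv (fun N => sum_f_R0 u N) l -> series_sum u = l.
Proof.
  intros H. eapply UL_sequence; [apply series_sum_spec; exists l|]; exact H.
Qed.

Lemma sum_nonneg f N : (forall k, 0 <= f k) -> 0 <= sum_f_R0 f N.
Proof. intros Hf. induction N; simpl; [apply Hf|]. pose proof (Hf (S N)); lra. Qed.

Lemma term_le_sum f N j : (forall k, 0 <= f k) -> (j <= N)%nat -> f j <= sum_f_R0 f N.
Proof.
  intros Hf. induction N as [|N IH]; intros Hj.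
  - replace j with 0%nat by lia. simpl. lra.
  - simpl. destruct (Nat.eq_dec j (S N)) as [->|Hne].
    + pose proof (sum_nonneg f N Hf). lra.
    + pose proof (Hf (S N)). pose proof (IH ltac:(lia)). lra.
Qed.

Lemma Un_cv_const a : Un_cv (fun _ => a) a.
Proof. intros e He. exists 0%nat. intros n _. unfold Rdist. rewrite Rminus_diag, Rabs_R0. exact He. Qed.

Lemma series_sum_lin a b u v : summable u -> summable v ->
  summable (fun k => a * u k + b * v k) /\
  series_sum (fun k => a * u k + b * v k) = a * series_sum u + b * series_sum v.
Proof.
  intros Hu Hv.
  assert (H : Un_cv (fun N => sum_f_R0 (fun k => a * u k + b * v k) N)
                    (a * series_sum u + b * series_sum v)).
  { pose proof (CV_mult _ _ a _ (Un_cv_const a) (series_sum_spec u Hu)) as Ha.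
    pose proof (CV_mult _ _ b _ (Un_cv_const b) (series_sum_spec v Hv)) as Hb.
    intros eps Heps. destruct (CV_plus _ _ _ _ Ha Hb eps Heps) as [N HN]. exists N.
    intros n Hn. specialize (HN n Hn). rewrite sum_plus.
    rewrite (sum_eq (fun k => a * u k) (fun k => u k * a)), (sum_eq (fun k => b * v k) (fun k => v k * b))
      by (intros; ring).
    rewrite <- !scal_sum. exact HN. }
  split; [eexists; exact H|]. apply series_sum_unique, H.
Qed.

Lemma summable_geometric C : summable (fun k => C * (/2)^k).
Proof.
  assert (H1 : summable (fun k => 1 * (/2)^k)).
  { exists (/ (1 - /2)). apply GP_infinite. rewrite Rabs_right; lra. }
  destruct (series_sum_lin C 0 _ _ H1 H1) as [[l Hl] _]. exists l.
  intros eps Heps. destruct (Hl eps Heps) as [N HN]. exists N. intros n Hn.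
  rewrite (sum_eq _ (fun k => C * (1 * (/ 2) ^ k) + 0 * (1 * (/ 2) ^ k))) by (intros; ring).
  auto.
Qed.

Lemma summable_dominated u t : (forall k, Rabs (u k) <= t k) -> summable t -> summable u.
Proof.
  intros Hut [l Hl].
  assert (H1 : { l | Un_cv (fun N => sum_f_R0 (fun k => Rabs (u k)) N) l }).
  { apply (Rseries_CV_comp _ t). intros n; split; [apply Rabs_pos|apply Hut]. exists l; auto. }
  apply CV_Cauchy, cauchy_abs, R_complete in H1. destruct H1 as [l' Hl']. exists l'; auto.
Qed.

Lemma summable_eventually_geometric u K :
  (forall k, (K <= k)%nat -> Rabs (u k) <= (/2)^k) -> summable u.
Proof.
  intros H.
  set (S := sum_f_R0 (fun j => Rabs (u j) * 2^j) K).
  apply summable_dominated with (t := fun k => (1 + S) * (/2)^k); [|apply summable_geometric].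
  intros k.
  assert (Hterm : forall j, 0 <= Rabs (u j) * 2^j)
    by (intros j; pose proof (Rabs_pos (u j)); pose proof (pow_le 2 j); nra).
  assert (HS : 0 <= S) by (apply sum_nonneg; auto).
  assert (Hp : 0 < (/2)^k) by (apply pow_lt; lra).
  destruct (le_lt_dec K k) as [Hk|Hk].
  - specialize (H k Hk). nra.
  - assert (Rabs (u k) * 2^k <= S) by (apply (term_le_sum (fun j => Rabs (u j) * 2^j)); auto; lia).
    assert (E : Rabs (u k) = Rabs (u k) * 2^k * (/2)^k).
    { rewrite Rmult_assoc, <- Rpow_mult_distr. replace (2 * /2) with 1 by field. rewrite pow1. ring. }
    rewrite E. nra.
Qed.

Lemma series_sum_le u t : summable u -> summable t -> (forall k, u k <= t k) ->
  series_sum u <= series_sum t.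
Proof.
  intros Hu Ht H. apply (Rle_cv_lim (fun n => sum_Rle _ _ n (fun k _ => H k)) (series_sum_spec u Hu) (series_sum_spec t Ht)).
Qed.

Lemma series_sum_abs_le u t : summable u -> summable t -> (forall k, Rabs (u k) <= t k) ->
  Rabs (series_sum u) <= series_sum t.
Proof.
  intros Hu Ht H. destruct (series_sum_lin (-1) 0 t t Ht Ht) as [Hnt Ent].
  apply Rabs_le. split.
  - enough (series_sum (fun k => -1 * t k + 0 * t k) <= series_sum u) by lra.
    apply series_sum_le; auto. intros k. specialize (H k). pose proof (Rle_abs (u k)); pose proof (Rle_abs (- u k)); rewrite Rabs_Ropp in *; lra.
  - apply series_sum_le; auto. intros k. specialize (H k). pose proof (Rle_abs (u k)); pose proof (Rle_abs (- u k)); rewrite Rabs_Ropp in *; lra.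
Qed.

Lemma series_sum_nonneg t : summable t -> (forall k, 0 <= t k) -> 0 <= series_sum t.
Proof.
  intros Ht H. destruct (series_sum_lin 0 0 t t Ht Ht) as [H0 E0].
  replace 0 with (0 * series_sum t + 0 * series_sum t) at 1 by ring. rewrite <- E0.
  apply series_sum_le; auto. intros k. specialize (H k). lra.
Qed.

Lemma series_sum_finite u K : (forall k, (K < k)%nat -> u k = 0) -> series_sum u = sum_f_R0 u K.
Proof.
  intros H. apply series_sum_unique. intros eps Heps. exists K. intros n Hn.
  replace (sum_f_R0 u n) with (sum_f_R0 u K); [unfold Rdist; rewrite Rminus_diag, Rabs_R0; auto|].
  induction Hn as [|n Hn IH]; [reflexivity|]. simpl. rewrite <- IH, (H (S n)) by lia. ring.
Qed.

Definition Csummable (w : nat -> CC) : Prop :=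
  summable (fun k => fst (w k)) /\ summable (fun k => snd (w k)).

Definition Csum (w : nat -> CC) : CC :=
  (series_sum (fun k => fst (w k)), series_sum (fun k => snd (w k))).

Lemma Csummable_eventually_geometric w K :
  (forall k, (K <= k)%nat -> norm1 (w k) <= (/2)^k) -> Csummable w.
Proof.
  intros H. split; apply (summable_eventually_geometric _ K); intros k Hk;
  [pose proof (Rabs_fst_le_norm1 (w k))|pose proof (Rabs_snd_le_norm1 (w k))]; specialize (H k Hk); lra.
Qed.

Lemma Csum_sub u v : Csummable u -> Csummable v ->
  Csummable (fun k => Csub (u k) (v k)) /\
  Csum (fun k => Csub (u k) (v k)) = Csub (Csum u) (Csum v).
Proof.
  intros [H1 H2] [H3 H4].
  destruct (series_sum_lin 1 (-1) _ _ H1 H3) as [A1 B1].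
  destruct (series_sum_lin 1 (-1) _ _ H2 H4) as [A2 B2].
  assert (E1 : (fun k => fst (Csub (u k) (v k))) = (fun k => 1 * fst (u k) + -1 * fst (v k)))
    by (apply functional_extensionality; intros; unfold Csub, Cadd, Copp; simpl; ring).
  assert (E2 : (fun k => snd (Csub (u k) (v k))) = (fun k => 1 * snd (u k) + -1 * snd (v k)))
    by (apply functional_extensionality; intros; unfold Csub, Cadd, Copp; simpl; ring).
  unfold Csummable, Csum. rewrite E1, E2, B1, B2. split; [split; auto|].
  unfold Csub, Cadd, Copp; simpl. f_equal; ring.
Qed.

Lemma Csum_mul_r u c : Csummable u ->
  Csummable (fun k => Cmul (u k) c) /\ Csum (fun k => Cmul (u k) c) = Cmul (Csum u) c.
Proof.
  intros [H1 H2].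
  destruct (series_sum_lin (fst c) (- snd c) _ _ H1 H2) as [A1 B1].
  destruct (series_sum_lin (snd c) (fst c) _ _ H1 H2) as [A2 B2].
  assert (E1 : (fun k => fst (Cmul (u k) c)) = (fun k => fst c * fst (u k) + - snd c * snd (u k)))
    by (apply functional_extensionality; intros; unfold Cmul; simpl; ring).
  assert (E2 : (fun k => snd (Cmul (u k) c)) = (fun k => snd c * fst (u k) + fst c * snd (u k)))
    by (apply functional_extensionality; intros; unfold Cmul; simpl; ring).
  unfold Csummable, Csum. rewrite E1, E2, B1, B2. split; [split; auto|].
  unfold Cmul; simpl. f_equal; ring.
Qed.

Lemma Csum_norm1_le w t : Csummable w -> summable t -> (forall k, norm1 (w k) <= t k) ->
  norm1 (Csum w) <= 2 * series_sum t.
Proof.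
  intros [H1 H2] Ht H. unfold norm1 at 1, Csum; simpl.
  pose proof (series_sum_abs_le _ t H1 Ht (fun k => Rle_trans _ _ _ (Rabs_fst_le_norm1 (w k)) (H k))).
  pose proof (series_sum_abs_le _ t H2 Ht (fun k => Rle_trans _ _ _ (Rabs_snd_le_norm1 (w k)) (H k))).
  lra.
Qed.

Fixpoint Csum_upto (f : nat -> CC) (n : nat) : CC :=
  match n with O => C0 | S n => Cadd (Csum_upto f n) (f n) end.

Lemma Csum_upto_ext f g n : (forall l, (l < n)%nat -> f l = g l) -> Csum_upto f n = Csum_upto g n.
Proof.
  induction n; intros H; simpl; [reflexivity|].
  rewrite IHn, H by (try intros; try apply H; lia). reflexivity.
Qed.

Lemma Csum_finite w K : (forall k, (K < k)%nat -> w k = C0) -> Csum w = Csum_upto w (S K).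
Proof.
  intros H. unfold Csum.
  rewrite !(series_sum_finite _ K) by (intros k Hk; rewrite H by auto; reflexivity).
  clear H. induction K as [|K IH]; simpl in *; [cring|].
  rewrite <- IH. destruct (w (S K)). reflexivity.
Qed.

(* Synthetic division by (z - a): l(z) = l(a) + (z - a) q(z). *)
Fixpoint synth_div (a : CC) (l : list CC) : list CC :=
  match l with
  | nil => nil
  | _ :: l' => match l' with nil => nil | _ => ev l' a :: synth_div a l' end
  end.

Lemma length_synth_div a l : length (synth_div a l) = pred (length l).
Proof.
  induction l as [|b l IH]; simpl; [reflexivity|].
  destruct l; simpl in *; [reflexivity|]. rewrite IH. reflexivity.
Qed.

Lemma synth_div_spec a l z : ev l z = Cadd (ev l a) (Cmul (Csub z a) (ev (synth_div a l) z)).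
Proof.
  induction l as [|b l IH]; simpl; [cring|].
  destruct l as [|c l']; simpl; [cring|].
  change (ev (c :: l') z) with (Cpoly_eval (c :: l') z) in IH. rewrite IH at 1. simpl. cring.
Qed.

Definition nonzero_poly (l : list CC) : Prop := Exists (fun x => x <> C0) l.

Lemma eval_zero_poly l z : ~ nonzero_poly l -> ev l z = C0.
Proof.
  induction l as [|b l IH]; intros H; simpl; [reflexivity|].
  assert (b = C0) by (apply NNPP; intro; apply H; left; auto).
  rewrite IH by (intro; apply H; right; auto). subst. cring.
Qed.

(* A nonzero polynomial has finitely many roots: factor out z when the constant
   term vanishes, and otherwise divide by (z - a) for a root a. *)
Lemma roots_finite l : nonzero_poly l -> exists L, forall z, ev l z = C0 -> In z L.
Proof.
  remember (length l) as n eqn:Hn. revert l Hn.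
  induction n as [n IH] using lt_wf_ind; intros [|b l'] Hn Hnz; [inversion Hnz|].
  simpl in Hn. destruct (Ceq_dec b C0) as [->|Hb].
  - assert (Hnz' : nonzero_poly l') by (inversion Hnz; subst; [contradiction|auto]).
    destruct (IH (length l') ltac:(lia) l' eq_refl Hnz') as [L HL].
    exists (C0 :: L). intros z Hz. simpl in Hz. rewrite Cadd_0_l in Hz.
    destruct (Cmul_eq0 _ _ Hz) as [->|H]; [left|right]; auto.
  - destruct (classic (exists a, ev (b :: l') a = C0)) as [[a Ha]|Hno];
      [|exists nil; intros z Hz; exfalso; apply Hno; exists z; auto].
    set (q := synth_div a (b :: l')).
    assert (Hq : nonzero_poly q).
    { apply NNPP. intro Hq0. apply Hb. pose proof (synth_div_spec a (b :: l') C0) as E. fold q in E.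
      rewrite Ha, (eval_zero_poly q), Cmul_0_r, Cadd_0_l in E by auto.
      rewrite <- E. simpl. cring. }
    assert (Hlq : (length q < n)%nat) by (unfold q; rewrite length_synth_div; simpl; lia).
    destruct (IH _ Hlq q eq_refl Hq) as [L HL].
    exists (a :: L). intros z Hz.
    rewrite (synth_div_spec a), Ha, Cadd_0_l in Hz. fold q in Hz.
    destruct (Cmul_eq0 _ _ Hz) as [H|H]; [left; symmetry; apply Csub_eq0, H|right; auto].
Qed.

(* The algebraic numbers are countable: integers, integer lists (via Cantor
   pairing) and hence the roots of integer polynomials can be enumerated. *)
Definition int_of_nat (n : nat) : Z :=
  let '(a, b) := Cantor.of_nat n in (Z.of_nat a - Z.of_nat b)%Z.

Lemma int_of_nat_surj z : exists n, int_of_nat n = z.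
Proof.
  exists (Cantor.to_nat (Z.to_nat z, Z.to_nat (- z))). unfold int_of_nat. rewrite cancel_of_to. lia.
Qed.

Fixpoint intlist_of_nat_len (len c : nat) : list Z :=
  match len with
  | O => nil
  | S len => let '(x, y) := Cantor.of_nat c in int_of_nat x :: intlist_of_nat_len len y
  end.

Definition intlist_of_nat (n : nat) : list Z :=
  let '(len, c) := Cantor.of_nat n in intlist_of_nat_len len c.

Lemma intlist_of_nat_surj l : exists n, intlist_of_nat n = l.
Proof.
  assert (H : exists c, intlist_of_nat_len (length l) c = l).
  { induction l as [|z l [c Hc]]; [exists 0%nat; reflexivity|].
    destruct (int_of_nat_surj z) as [m Hm]. exists (Cantor.to_nat (m, c)).
    cbn [intlist_of_nat_len length]. rewrite cancel_of_to, Hm, Hc. reflexivity. }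
  destruct H as [c Hc]. exists (Cantor.to_nat (length l, c)).
  unfold intlist_of_nat. rewrite cancel_of_to. auto.
Qed.

Definition int_poly (lz : list Z) : list CC := map (fun k => RtoC (IZR k)) lz.

Lemma int_poly_nonzero lz : Exists (fun k => k <> 0%Z) lz -> nonzero_poly (int_poly lz).
Proof.
  induction 1 as [k l Hk|k l _ IH]; simpl; [left|right; auto].
  unfold RtoC, C0. intro E. injection E as E. apply Hk, eq_IZR, E.
Qed.

Definition root_list (l : list CC) : list CC :=
  match excluded_middle_informative (nonzero_poly l) with
  | left H => proj1_sig (constructive_indefinite_description _ (roots_finite l H))
  | right _ => nil
  end.

Lemma root_list_spec l : nonzero_poly l -> forall z, ev l z = C0 -> In z (root_list l).
Proof.
  intros H. unfold root_list. destruct (excluded_middle_informative _); [|contradiction].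
  apply (proj2_sig (constructive_indefinite_description _ (roots_finite l n))).
Qed.

Definition alg_enum (n : nat) : CC :=
  let '(i, j) := Cantor.of_nat n in nth j (root_list (int_poly (intlist_of_nat i))) C0.

Lemma alg_enum_surj z : algebraic z -> exists n, alg_enum n = z.
Proof.
  intros [lz [Hnz Hz]]. destruct (intlist_of_nat_surj lz) as [i Hi].
  pose proof (root_list_spec _ (int_poly_nonzero lz Hnz) z Hz) as Hin.
  destruct (In_nth _ _ C0 Hin) as [j [_ Hj]].
  exists (Cantor.to_nat (i, j)). unfold alg_enum. rewrite cancel_of_to, Hi. auto.
Qed.

(* Cantor's nested-interval argument: every interval (0, e) contains a real
   missed by a given sequence.  At step n the current interval is shrunk to
   one of its outer thirds, chosen so as to exclude [t n]. *)
Definition avoid_step (t : R) (ab : R * R) : R * R :=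
  let '(a, b) := ab in
  if Rlt_dec t ((a + b) / 2) then ((a + 2 * b) / 3, b) else (a, (2 * a + b) / 3).

Fixpoint avoid_interval (t : nat -> R) (e : R) (n : nat) : R * R :=
  match n with
  | O => (e / 3, 2 * e / 3)
  | S n => avoid_step (t n) (avoid_interval t e n)
  end.

Lemma avoid_interval_step t e n : 0 < e ->
  let '(a, b) := avoid_interval t e n in
  let '(a', b') := avoid_interval t e (S n) in
  a < b /\ a <= a' /\ a' < b' /\ b' <= b /\ (t n < a' \/ b' < t n).
Proof.
  intros He. induction n as [|n IH]; simpl in *.
  - destruct (Rlt_dec (t 0%nat) ((e / 3 + 2 * e / 3) / 2)); repeat split; lra.
  - destruct (avoid_interval t e n) as [a b].
    destruct (avoid_step (t n) (a, b)) as [a' b'] eqn:E.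
    destruct IH as (_ & _ & Hab & _). unfold avoid_step.
    destruct (Rlt_dec (t (S n)) ((a' + b') / 2)); repeat split; lra.
Qed.

Lemma avoid_interval_nested t e n m : 0 < e -> (n <= m)%nat ->
  fst (avoid_interval t e n) <= fst (avoid_interval t e m) /\
  snd (avoid_interval t e m) <= snd (avoid_interval t e n).
Proof.
  intros He. induction 1 as [|m Hm IH]; [lra|].
  pose proof (avoid_interval_step t e m He) as H.
  destruct (avoid_interval t e m), (avoid_interval t e (S m)). simpl in *. lra.
Qed.

Lemma avoid_interval_left_le_right t e n m : 0 < e ->
  fst (avoid_interval t e n) <= snd (avoid_interval t e m).
Proof.
  intros He. destruct (avoid_interval_nested t e n (Nat.max n m) He ltac:(lia)) as [A _].
  destruct (avoid_interval_nested t e m (Nat.max n m) He ltac:(lia)) as [_ B].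
  pose proof (avoid_interval_step t e (Nat.max n m) He) as H.
  destruct (avoid_interval t e (Nat.max n m)), (avoid_interval t e (S (Nat.max n m))).
  simpl in *. lra.
Qed.

Lemma avoid_sequence (t : nat -> R) (e : R) : 0 < e -> exists x, 0 < x < e /\ forall n, x <> t n.
Proof.
  intros He.
  set (E := fun y => exists n, y = fst (avoid_interval t e n)).
  assert (Hb : bound E).
  { exists (snd (avoid_interval t e 0)). intros y [n ->]. apply avoid_interval_left_le_right; auto. }
  destruct (completeness E Hb (ex_intro _ _ (ex_intro _ 0%nat eq_refl))) as [x [Hub Hl]].
  assert (Hlo : forall n, fst (avoid_interval t e n) <= x) by (intros n; apply Hub; exists n; auto).
  assert (Hhi : forall m, x <= snd (avoid_interval t e m)).
  { intros m. apply Hl. intros y [n ->]. apply avoid_interval_left_le_right; auto. }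
  exists x. split.
  - pose proof (Hlo 0%nat). pose proof (Hhi 0%nat). simpl in *. lra.
  - intros n Hx. pose proof (avoid_interval_step t e n He) as H.
    pose proof (Hlo (S n)). pose proof (Hhi (S n)).
    destruct (avoid_interval t e n), (avoid_interval t e (S n)). simpl in *. lra.
Qed.

Lemma transcendental_perturbation B q e : q <> C0 -> 0 < e ->
  exists c, norm1 c < e /\ ~ algebraic (Cadd B (Cmul c q)).
Proof.
  intros Hq He.
  (* t n is the parameter x with B + x q = alg_enum n, if there is one *)
  set (t := fun n => match excluded_middle_informative
                             (exists x, Cadd B (Cmul (RtoC x) q) = alg_enum n) with
                     | left H => proj1_sig (constructive_indefinite_description _ H)
                     | right _ => 0 end).
  destruct (avoid_sequence t e He) as [x [Hx Ht]].
  exists (RtoC x). split; [unfold norm1, RtoC; simpl; rewrite Rabs_R0, Rabs_right; lra|].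
  intros Halg. destruct (alg_enum_surj _ Halg) as [n Hn].
  apply (Ht n). unfold t. destruct (excluded_middle_informative _) as [H|H];
    [|exfalso; apply H; exists x; auto].
  destruct (constructive_indefinite_description _ H) as [x' Hx']. simpl. rewrite Hn in Hx'.
  assert (E : Cmul (RtoC (x - x')) q = C0).
  { replace (Cmul (RtoC (x - x')) q)
      with (Csub (Cadd B (Cmul (RtoC x) q)) (Cadd B (Cmul (RtoC x') q))) by cring.
    rewrite Hx'. apply Csub_diag. }
  destruct (Cmul_eq0 _ _ E) as [E'|E']; [|contradiction].
  unfold RtoC, C0 in E'. injection E' as E'. lra.
Qed.

(* Gaussian rationals a/N + i b/N are algebraic (roots of N^2 X^2 - 2aN X + a^2 + b^2),
   and they are dense: every point has nonzero ones arbitrarily close. *)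
Lemma gaussian_rational_algebraic (a b : Z) (N : nat) :
  (0 < N)%nat -> algebraic (IZR a / INR N, IZR b / INR N).
Proof.
  intros HN. assert (HNR : INR N <> 0) by (apply not_0_INR; lia).
  set (n := Z.of_nat N).
  exists ((a*a+b*b)%Z :: (-2*a*n)%Z :: (n*n)%Z :: nil). split.
  - right. right. left. unfold n. lia.
  - cbn [Cpoly_eval map]. unfold Cadd, Cmul, RtoC, C0; cbn [fst snd]. unfold n.
    rewrite ?plus_IZR, ?mult_IZR, ?opp_IZR, <- INR_IZR_INZ. f_equal; field; auto.
Qed.

Lemma up_approx (x : R) : x < IZR (up x) <= x + 1.
Proof. pose proof (archimed x). lra. Qed.

Lemma gaussian_rational_near B e : 0 < e ->
  exists r, norm1 (Csub r B) < e /\ algebraic r /\ r <> C0.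
Proof.
  intros He.
  destruct (INR_unbounded (3 / e)) as [N HN].
  assert (H3e : 0 < 3 / e) by (apply Rdiv_lt_0_compat; lra).
  assert (HNp : (0 < N)%nat) by (destruct N; [simpl in HN; lra|lia]).
  assert (HNR : 0 < INR N) by (apply lt_0_INR; auto).
  (* real part rounded up, and moved to 1/N if it would be 0 *)
  set (a0 := up (INR N * fst B)).
  set (a := if Z.eq_dec a0 0 then 1%Z else a0).
  set (b := up (INR N * snd B)).
  assert (Ha : Rabs (IZR a / INR N - fst B) <= 2 / INR N).
  { pose proof (up_approx (INR N * fst B)) as U. fold a0 in U.
    apply Rabs_le. unfold a. destruct (Z.eq_dec a0 0) as [E|E]; [rewrite E in U|];
      split; apply (Rmult_le_reg_l (INR N)); auto; field_simplify; try lra; nra. }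
  assert (Hb : Rabs (IZR b / INR N - snd B) <= 1 / INR N).
  { pose proof (up_approx (INR N * snd B)) as U. fold b in U.
    apply Rabs_le. split; apply (Rmult_le_reg_l (INR N)); auto; field_simplify; try lra; nra. }
  exists (IZR a / INR N, IZR b / INR N). split; [|split].
  - unfold norm1, Csub, Cadd, Copp; simpl. unfold Rminus in Ha, Hb.
    assert (3 / INR N < e).
    { assert (3 < e * INR N).
      { apply (Rmult_lt_compat_l e) in HN; auto. replace (e * (3 / e)) with 3 in HN by (field; lra).
        exact HN. }
      apply (Rmult_lt_reg_r (INR N)); auto. replace (3 / INR N * INR N) with 3 by (field; lra). lra. }
    replace (3 / INR N) with (2 / INR N + 1 / INR N) in * by (field; lra). lra.
  - apply gaussian_rational_algebraic; auto.
  - unfold C0. intro E. injection E as E1 E2.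
    assert (Ha0 : IZR a = 0).
    { apply (Rmult_eq_reg_r (/ INR N)); [|apply Rinv_neq_0_compat; lra]. rewrite Rmult_0_l. exact E1. }
    apply eq_IZR in Ha0. unfold a in Ha0. destruct (Z.eq_dec a0 0); lia.
Qed.

Definition Cinv (q : CC) : CC :=
  (fst q / (fst q * fst q + snd q * snd q), - snd q / (fst q * fst q + snd q * snd q)).

Lemma Cmul_Cinv_r q : q <> C0 -> Cmul q (Cinv q) = RtoC 1.
Proof.
  destruct q as [a b]. intros H. unfold Cinv, Cmul, RtoC; simpl.
  assert (a * a + b * b <> 0) by (intro E; apply H; unfold C0; f_equal; nra).
  f_equal; field; auto.
Qed.

Lemma algebraic_perturbation B q e : q <> C0 -> 0 < e ->
  exists c, norm1 c < e /\ algebraic (Cadd B (Cmul c q)) /\ Cadd B (Cmul c q) <> C0.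
Proof.
  intros Hq He.
  pose proof (norm1_nonneg (Cinv q)) as HK. set (K := norm1 (Cinv q)) in *.
  destruct (gaussian_rational_near B (e / (K + 1)) ltac:(apply Rdiv_lt_0_compat; lra))
    as [r [Hr [Ha Hnz]]].
  exists (Cmul (Csub r B) (Cinv q)).
  replace (Cadd B (Cmul (Cmul (Csub r B) (Cinv q)) q)) with r.
  - split; auto. pose proof (norm1_mul (Csub r B) (Cinv q)). fold K in H.
    pose proof (norm1_nonneg (Csub r B)).
    assert (norm1 (Csub r B) * (K + 1) < e).
    { apply (Rmult_lt_compat_r (K + 1)) in Hr; [|lra].
      replace (e / (K + 1) * (K + 1)) with e in Hr by (field; lra). exact Hr. }
    nra.
  - pose proof (Cmul_Cinv_r q Hq) as H. set (qi := Cinv q) in *. clearbody qi.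
    replace (Cmul (Cmul (Csub r B) qi) q) with (Cmul (Csub r B) (Cmul q qi)) by cring.
    rewrite H. cring.
Qed.

Section NodeSeries.

(* The nodes p 0, p 1, ... (repetitions allowed) and the coefficients of the
   series  F(z) = sum_k c_k (z - p 0) ... (z - p (k-1)). *)
Variable p : nat -> CC.

Definition basis (s k : nat) : list CC := derivn s (node_poly p k).

(* The size of the first k derivatives of the k-th node polynomial on the disc
   of radius k; coefficients below [coef_bound] make the series of every
   derivative converge locally uniformly and geometrically fast. *)
Definition weight (k : nat) : R :=
  sum_f_R0 (fun s => maj0 (INR k) (basis s k) + maj2 (INR k) (basis s k)) k.

Definition coef_bound (k : nat) : R := (/2)^k / (1 + weight k).

Definition pivot (l k : nat) : CC := ev (basis (order p k) l) (p k).

Lemma weight_nonneg k : 0 <= weight k.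
Proof.
  apply sum_nonneg. intros s.
  destruct (maj_nonneg (INR k) (basis s k) (pos_INR k)) as [A [_ B]]. lra.
Qed.

Lemma coef_bound_pos k : 0 < coef_bound k.
Proof.
  unfold coef_bound. pose proof (weight_nonneg k).
  apply Rdiv_lt_0_compat; [apply pow_lt|]; lra.
Qed.

Lemma pivot_diag_neq0 k : pivot k k <> C0.
Proof. apply node_poly_pivot. Qed.

Lemma pivot_vanish l k : (k < l)%nat -> pivot l k = C0.
Proof. apply node_poly_vanish. Qed.

Variable c : nat -> CC.
Hypothesis c_small : forall k, norm1 (c k) <= coef_bound k.

(* The s-th derivative of F, defined termwise. *)
Definition node_series (s : nat) (z : CC) : CC := Csum (fun k => Cmul (c k) (ev (basis s k) z)).

Lemma term_bound s k r : (s <= k)%nat -> 0 <= r -> r <= INR k ->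
  norm1 (c k) * (maj0 r (basis s k) + maj2 r (basis s k)) <= (/2)^k.
Proof.
  intros Hs Hr Hrk.
  destruct (maj_mono r (INR k) (basis s k) Hr Hrk) as [A0 [_ A2]].
  assert (HW : maj0 (INR k) (basis s k) + maj2 (INR k) (basis s k) <= weight k).
  { apply (term_le_sum (fun s => maj0 (INR k) (basis s k) + maj2 (INR k) (basis s k))); auto.
    intros j. destruct (maj_nonneg (INR k) (basis j k) (pos_INR k)) as [B0 [_ B2]]. lra. }
  pose proof (weight_nonneg k). pose proof (norm1_nonneg (c k)). pose proof (c_small k).
  assert (Hp : 0 < (/2)^k) by (apply pow_lt; lra).
  assert (norm1 (c k) * weight k <= (/2)^k).
  { assert (norm1 (c k) * (1 + weight k) <= (/2)^k); [|nra].
    apply (Rmult_le_compat_r (1 + weight k)) in H1; [|lra].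
    unfold coef_bound in H1. replace ((/2)^k / (1 + weight k) * (1 + weight k)) with ((/2)^k) in H1
      by (field; lra). exact H1. }
  nra.
Qed.

Lemma exists_nat_ge r : exists N, r <= INR N.
Proof. destruct (INR_unbounded r) as [N HN]. exists N. lra. Qed.

Lemma node_series_summable s z : Csummable (fun k => Cmul (c k) (ev (basis s k) z)).
Proof.
  destruct (exists_nat_ge (norm1 z)) as [N HN].
  apply (Csummable_eventually_geometric _ (Nat.max s N)). intros k Hk.
  assert (INR N <= INR k) by (apply le_INR; lia).
  pose proof (term_bound s k (norm1 z) ltac:(lia) (norm1_nonneg z) ltac:(lra)).
  pose proof (norm1_mul (c k) (ev (basis s k) z)).
  pose proof (value_bound (norm1 z) (basis s k) z (Rle_refl _)).
  destruct (maj_nonneg (norm1 z) (basis s k) (norm1_nonneg z)) as [_ [_ M2]].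
  pose proof (norm1_nonneg (c k)). nra.
Qed.

Lemma remainder_weights_summable s r : 0 <= r ->
  summable (fun k => norm1 (c k) * maj2 r (basis s k)).
Proof.
  intros Hr. destruct (exists_nat_ge r) as [N HN].
  apply (summable_eventually_geometric _ (Nat.max s N)). intros k Hk.
  assert (INR N <= INR k) by (apply le_INR; lia).
  pose proof (term_bound s k r ltac:(lia) Hr ltac:(lra)).
  destruct (maj_nonneg r (basis s k) Hr) as [M0 [_ M2]]. pose proof (norm1_nonneg (c k)).
  rewrite Rabs_right by (apply Rle_ge, Rmult_le_pos; auto). nra.
Qed.

Lemma node_series_has_cderiv s z : has_cderiv (node_series s) z (node_series (S s) z).
Proof.
  set (r := norm1 z + 1). pose proof (norm1_nonneg z).
  set (t := fun k => norm1 (c k) * maj2 r (basis s k)).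
  assert (Ht : summable t) by (apply remainder_weights_summable; unfold r; lra).
  assert (Ht0 : forall k, 0 <= t k).
  { intros k. destruct (maj_nonneg r (basis s k) ltac:(unfold r; lra)) as [_ [_ M2]].
    pose proof (norm1_nonneg (c k)). unfold t. nra. }
  apply (has_cderiv_of_quadratic_bound _ _ _ (2 * series_sum t));
    [pose proof (series_sum_nonneg t Ht Ht0); lra|].
  intros h Hh. pose proof (norm1_le_Cmod h).
  assert (Hhr : norm1 z + norm1 h <= r) by (unfold r; lra).
  set (u1 := fun k => Cmul (c k) (ev (basis s k) (Cadd z h))).
  set (u0 := fun k => Cmul (c k) (ev (basis s k) z)).
  set (u2 := fun k => Cmul (c k) (ev (basis (S s) k) z)).
  destruct (Csum_sub u1 u0 (node_series_summable _ _) (node_series_summable _ _)) as [C1 E1].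
  destruct (Csum_mul_r u2 h (node_series_summable _ _)) as [C2 E2].
  destruct (Csum_sub _ _ C1 C2) as [C3 E3].
  unfold node_series. fold u1 u0 u2. rewrite <- E1, <- E2, <- E3.
  set (a := norm1 h * norm1 h).
  destruct (series_sum_lin a 0 t t Ht Ht) as [C4 E4].
  replace (a * (2 * series_sum t)) with (2 * (a * series_sum t + 0 * series_sum t)) by ring.
  rewrite <- E4. apply Csum_norm1_le; auto. intros k. unfold u1, u0, u2.
  replace (Csub (Csub (Cmul (c k) (ev (basis s k) (Cadd z h))) (Cmul (c k) (ev (basis s k) z)))
            (Cmul (Cmul (c k) (ev (basis (S s) k) z)) h))
    with (Cmul (c k) (Csub (Csub (ev (basis s k) (Cadd z h)) (ev (basis s k) z))
                           (Cmul (ev (deriv (basis s k)) z) h))) by (simpl; cring).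
  pose proof (norm1_mul (c k)
    (Csub (Csub (ev (basis s k) (Cadd z h)) (ev (basis s k) z)) (Cmul (ev (deriv (basis s k)) z) h))).
  pose proof (taylor2_bound r (basis s k) z h Hhr).
  pose proof (norm1_nonneg (c k)). unfold t, a. nra.
Qed.

Lemma node_series_at_node k :
  node_series (order p k) (p k) = Csum_upto (fun l => Cmul (c l) (pivot l k)) (S k).
Proof.
  unfold node_series. rewrite (Csum_finite _ k); [reflexivity|].
  intros l Hl. fold (pivot l k). rewrite pivot_vanish by auto. apply Cmul_0_r.
Qed.

End NodeSeries.

Lemma derivatives_of_polynomial (L : list CC) (D : nat -> CC -> CC) :
  (forall z, D 0%nat z = ev L z) -> (forall s z, has_cderiv (D s) z (D (S s) z)) ->
  forall s z, D s z = ev (derivn s L) z.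
Proof.
  intros H0 HD s. induction s as [|s IH]; intros z; [apply H0|].
  assert (E : D s = ev (derivn s L)) by (apply functional_extensionality; auto).
  pose proof (HD s z) as H1. rewrite E in H1.
  exact (cderiv_unique _ _ _ _ H1 (poly_has_cderiv (derivn s L) z)).
Qed.

Lemma not_polynomial (g : CC -> CC) (D : nat -> CC -> CC) :
  derivative_sequence g D -> (forall s, D s C0 <> C0) -> ~ is_polynomial_fun g.
Proof.
  intros [H0 HD] Hnz [L HL]. apply (Hnz (length L)).
  rewrite (derivatives_of_polynomial L D) by (subst; auto).
  apply eval_derivn_high. lia.
Qed.

Lemma C0_algebraic : algebraic C0.
Proof.
  exists (0%Z :: 1%Z :: nil). split; [right; left; lia|].
  cbn [Cpoly_eval map]. unfold Cadd, Cmul, RtoC, C0; cbn [fst snd]. f_equal; ring.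
Qed.

Definition good_value (A : CC -> Prop) (a V : CC) : Prop :=
  (A a -> algebraic V /\ V <> C0) /\ (~ A a -> ~ algebraic V).

Lemma good_value_neq0 A a V : good_value A a V -> V <> C0.
Proof.
  intros [H1 H2] ->. destruct (classic (A a)) as [Ha|Ha].
  - apply (H1 Ha); reflexivity.
  - apply (H2 Ha), C0_algebraic.
Qed.

Lemma recursive_choice (P : list CC -> CC -> Prop) :
  (forall pre, exists x, P pre x) -> exists c : nat -> CC, forall k, P (map c (seq 0 k)) (c k).
Proof.
  intros H.
  set (next := fun pre => proj1_sig (constructive_indefinite_description _ (H pre))).
  set (prefix := fix prefix n := match n with O => nil | S n => prefix n ++ next (prefix n) :: nil end).
  exists (fun k => next (prefix k)).
  assert (Hpre : forall k, prefix k = map (fun k => next (prefix k)) (seq 0 k)).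
  { induction k as [|k IH]; [reflexivity|].
    rewrite seq_S, map_app, <- IH. reflexivity. }
  intros k. rewrite <- Hpre. apply (proj2_sig (constructive_indefinite_description _ (H (prefix k)))).
Qed.

(* At each node, the new coefficient moves the value of the relevant derivative
   along a line through the contribution of the earlier terms, with slope the
   nonzero pivot; a good value is reachable by a coefficient of any smallness. *)
Lemma good_coefficient_exists A p k B :
  exists x, norm1 x < coef_bound p k /\ good_value A (p k) (Cadd B (Cmul x (pivot p k k))).
Proof.
  destruct (classic (A (p k))) as [HA|HA].
  - destruct (algebraic_perturbation B (pivot p k k) (coef_bound p k)
                (pivot_diag_neq0 p k) (coef_bound_pos p k)) as [x [H1 [H2 H3]]].
    exists x. split; [|split]; tauto.
  - destruct (transcendental_perturbation B (pivot p k k) (coef_bound p k)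
                (pivot_diag_neq0 p k) (coef_bound_pos p k)) as [x [H1 H2]].
    exists x. split; [|split]; tauto.
Qed.

Lemma good_coefficients A p : exists c : nat -> CC,
  (forall k, norm1 (c k) <= coef_bound p k) /\
  (forall k, good_value A (p k) (node_series p c (order p k) (p k))).
Proof.
  destruct (recursive_choice (fun pre x =>
    let k := length pre in norm1 x < coef_bound p k /\
    good_value A (p k) (Cadd (Csum_upto (fun l => Cmul (nth l pre C0) (pivot p l k)) k)
                             (Cmul x (pivot p k k)))))
    as [c Hc]; [intros pre; apply good_coefficient_exists|].
  exists c. split; intros k; destruct (Hc k) as [H1 H2]; rewrite length_map, length_seq in H1, H2;
    [lra|].
  rewrite node_series_at_node. simpl Csum_upto.
  erewrite Csum_upto_ext; [exact H2|]. intros l Hl. simpl.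
  rewrite (nth_indep _ _ (c 0%nat)) by (rewrite length_map, length_seq; lia).
  rewrite map_nth, seq_nth by lia. reflexivity.
Qed.

(* A schedule of nodes visiting every algebraic number infinitely often:
   the k-th node is the m-th algebraic number when k encodes a pair (m, t). *)
Definition schedule (k : nat) : CC := alg_enum (fst (Cantor.of_nat k)).

Lemma schedule_recurrent a : algebraic a -> forall N, exists k, (N <= k)%nat /\ schedule k = a.
Proof.
  intros Ha N. destruct (alg_enum_surj a Ha) as [m Hm].
  exists (Cantor.to_nat (m, N)). split; [pose proof (to_nat_non_decreasing m N); lia|].
  unfold schedule. rewrite cancel_of_to. exact Hm.
Qed.

Lemma multiplicity_unbounded p a : (forall N, exists k, (N <= k)%nat /\ p k = a) ->
  forall s, exists K, (s <= multiplicity p a K)%nat.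
Proof.
  intros Hinf s. induction s as [|s [K HK]]; [exists 0%nat; lia|].
  destruct (Hinf K) as [k [Hk Hpk]]. exists (S k). simpl.
  destruct (Ceq_dec (p k) a) as [_|E]; [|contradiction].
  pose proof (multiplicity_mono p a K k Hk). lia.
Qed.

Lemma order_surj p a : (forall N, exists k, (N <= k)%nat /\ p k = a) ->
  forall s, exists k, p k = a /\ order p k = s.
Proof.
  intros Hinf s. destruct (multiplicity_unbounded p a Hinf (S s)) as [K HK].
  induction K as [|K IH]; simpl in HK; [lia|].
  destruct (Nat.le_gt_cases (S s) (multiplicity p a K)) as [H|H]; [auto|].
  destruct (Ceq_dec (p K) a) as [<-|E]; [|lia].
  exists K. split; [reflexivity|]. unfold order. lia.
Qed.

Theorem theorem2 :
  forall A : CC -> Prop,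
    (forall z, A z -> algebraic z) ->
    exists (f : CC -> CC) (D : nat -> CC -> CC),
      transcendental_entire f /\
      derivative_sequence f D /\
      forall (s : nat) (alpha : CC), exceptional_set (D s) alpha <-> A alpha.
Proof.
  intros A HA.
  destruct (good_coefficients A schedule) as [c [Hsmall Hgood]].
  set (D := node_series schedule c).
  assert (HD : derivative_sequence (D 0%nat) D)
    by (split; [reflexivity|]; intros s z; apply node_series_has_cderiv, Hsmall).
  assert (Hval : forall s a, algebraic a -> good_value A a (D s a)).
  { intros s a Ha. destruct (order_surj schedule a (schedule_recurrent a Ha) s) as [k [<- <-]].
    apply Hgood. }
  exists (D 0%nat), D. split; [split|split; [exact HD|]].
  - intros z. exists (D 1%nat z). apply HD.
  - apply (not_polynomial _ D HD). intros s. exact (good_value_neq0 _ _ _ (Hval s C0 C0_algebraic)).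
  - intros s a. split.
    + intros [Ha Hd]. apply NNPP. intros HnA. exact (proj2 (Hval s a Ha) HnA Hd).
    + intros HAa. split; [auto|]. apply (proj1 (Hval s a (HA a HAa)) HAa).
Qed.
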